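(* Let $p=p_1\otimes\cdots\otimes p_L\in B_{\lambda_1}\otimes\cdots\otimes B_{\lambda_L}$ be any state, and write $\rho_{k,d}=\rho_{k,d}(p)$ and $\bar\rho_{k,d}=\rho_{k,d}(T_\infty(p))$. Then for all $1\le k\le L$ and $2\le d\le n+1$, $$\bar\rho_{k,d-1}+\rho_{k-1,d}=\max\big(\bar\rho_{k,d}+\rho_{k-1,d-1},\ \bar\rho_{k-1,d-1}+\rho_{k,d}-\lambda_k\big).$$
   Context: Fix $n\ge1$. For $l\ge1$ let $B_l=\{x=(x_1,\dots,x_{n+1})\in\mathbb Z_{\ge0}^{n+1}: \sum_i x_i=l\}$ and $u_l=(l,0,\dots,0)\in B_l$. Indices of $x$ are read modulo $n+1$. For $x\in B_l,y\in B_m$ and $i\in\mathbb Z$ put $Q_i(x\otimes y)=\min_{1\le k\le n+1}\big(\sum_{j=1}^{k-1}x_{i+j}+\sum_{j=k+1}^{n+1}y_{i+j}\big)$ (so $Q_{n+1}=Q_0$) and $H(x\otimes y)=\min(l,m)-Q_0(x\otimes y)$. The combinatorial $R$ is the map $B_l\otimes B_m\to B_m\otimes B_l$, $x\otimes y\mapsto\tilde y\otimes\tilde x$, $\tilde x_i=x_i+Q_i-Q_{i-1}$, $\tilde y_i=y_i+Q_{i-1}-Q_i$ ($Q_j=Q_j(x\otimes y)$); write $x\otimes y\simeq\tilde y\otimes\tilde x$, and extend $\simeq$ to tensor products by applying $R$ to adjacent factors. Box-ball system: a state is $p=p_1\otimes\cdots\otimes p_L\in B_{\lambda_1}\otimes\cdots\otimes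 B_{\lambda_L}$ ($\lambda_j\ge1$). For $l\ge1$ let $v_0=u_l$ and recursively $v_{j-1}\otimes p_j\simeq p'_j\otimes v_j$ ($1\le j\le L$); then $T_l(p)=p'_1\otimes\cdots\otimes p'_L$. For all sufficiently large $l$, $T_l(p)$ is independent of $l$; this is $T_\infty(p)$. Writing $T_\infty^t(p)=p^t_1\otimes\cdots\otimes p^t_L$, $p^t_j=(x^t_{j,1},\dots,x^t_{j,n+1})$, define for $0\le k\le L$, $1\le d\le n+1$: $\rho_{k,d}(p)=\sum_{j=1}^k(x^0_{j,2}+\cdots+x^0_{j,d})+\sum_{t\ge1}\sum_{j=1}^k(x^t_{j,2}+\cdots+x^t_{j,n+1})$ (a finite sum), and $\rho_{k,0}(p)=\rho_{k,n+1}(p)-(\lambda_1+\cdots+\lambda_k)$. *)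

From Stdlib Require Import ClassicalEpsilon.
From mathcomp Require Import all_boot all_order all_algebra.
Set Implicit Arguments. Unset Strict Implicit. Unset Printing Implicit Defensive.
Import Order.TTheory GRing.Theory Num.Theory.

(* An element x = (x_1,...,x_{n+1}) of B_l is a list of n+1 naturals
   summing to l.  A state p_1 (x) ... (x) p_L is the list [:: p_1; ...; p_L]. *)
Definition elt := seq nat.
Definition state := seq elt.

Definition inB (n l : nat) (x : elt) : bool := (size x == n.+1) && (sumn x == l).

(* x_i, 1-based index read modulo n+1 (so x_0 = x_{n+1}). *)
Definition ent (n : nat) (x : elt) (i : nat) : nat := nth 0 x ((i + n) %% n.+1).

Definition uvac (n l : nat) : elt := l :: nseq n 0.

Definition Qterm (n : nat) (x y : elt) (i k : nat) : nat :=
  (\sum_(1 <= j < k) ent n x (i + j) + \sum_(k.+1 <= j < n.+2) ent n y (i + j))%N.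
Definition Q (n : nat) (x y : elt) (i : nat) : nat :=
  \big[minn/Qterm n x y i 1]_(1 <= k < n.+2) Qterm n x y i k.

(* combinatorial R : x (x) y |-> ytilde (x) xtilde, returned as the pair
   (ytilde, xtilde).  Subtraction is truncated; by the theory of R the true
   (integer) values are nonnegative, so this is exact. *)
Definition Rmap (n : nat) (x y : elt) : elt * elt :=
  ([seq (ent n y i + Q n x y i.-1 - Q n x y i)%N | i <- iota 1 n.+1],
   [seq (ent n x i + Q n x y i - Q n x y i.-1)%N | i <- iota 1 n.+1]).

(* carrier sweep: v_{j-1} (x) p_j ~ p'_j (x) v_j *)
Fixpoint sweep (n : nat) (v : elt) (p : state) : state :=
  match p with
  | [::] => [::]
  | x :: p' => let r := Rmap n v x in r.1 :: sweep n r.2 p'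
  end.

Definition Tl (n l : nat) (p : state) : state := sweep n (uvac n l) p.

Definition Tinf (n : nat) (p : state) : state :=
  epsilon (inhabits p) (fun q => exists N, forall l, (N <= l)%N -> Tl n l p = q).

Definition fsum (f : nat -> nat) : nat :=
  epsilon (inhabits 0%N)
    (fun s => exists N, forall M, (N <= M)%N -> (\sum_(1 <= t < M) f t)%N = s).

Definition balls (n d : nat) (x : elt) : nat := (\sum_(2 <= i < d.+1) ent n x i)%N.

Definition lam (p : state) (j : nat) : nat := sumn (nth [::] p j.-1).

Definition rho_pos (n : nat) (p : state) (k d : nat) : nat :=
  (\sum_(1 <= j < k.+1) balls n d (nth [::] p j.-1)
   + fsum (fun t => \sum_(1 <= j < k.+1) balls n n.+1 (nth [::] (iter t (Tinf n) p) j.-1)))%N.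

Definition rho (n : nat) (p : state) (k d : nat) : int :=
  if d == 0%N then (Posz (rho_pos n p k n.+1) - Posz (\sum_(1 <= j < k.+1) lam p j)%N)%R
  else Posz (rho_pos n p k d).

Definition is_state (n : nat) (p : state) : bool :=
  all (fun x => (size x == n.+1) && (0 < sumn x)%N) p.

(* Once l is at least the total number of balls, the first entry of the
   carrier stays at least the total mass of the sites still to be crossed.
   In this regime Q obeys the min-plus recursion Q_{i-1} + y_i = min(|y|, x_i + Q_i),
   so R is exact, conserves every colour between carrier and site, and ignores
   the first entry of the carrier; hence T_l is constant for such l.  The site
   output a of a carrier v crossing y then satisfies a_d <= v_d and
   y_2 + ... + y_d <= a_1 + a_2 + ... + a_{d-1}, one of them with equality.
   Since each application of T_infinity empties one more leading site, the
   series in rho(T_infinity p) is that of rho(p) shifted by one step, and the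
   two arguments of the max differ from the left-hand side by exactly the two
   defects above. *)

From Stdlib Require Import ClassicalEpsilon.
From mathcomp Require Import all_boot all_order all_algebra.
From mathcomp Require Import zify.
Import Order.TTheory GRing.Theory Num.Theory.
Set Implicit Arguments. Unset Strict Implicit. Unset Printing Implicit Defensive.

Local Open Scope nat_scope.
(* Otherwise [simpl] unfolds R through the projections [.1] and [.2]. *)
Local Opaque Rmap.

Lemma leq_sum_nat_term (F : nat -> nat) a b j : a <= j < b ->
  F j <= \sum_(a <= i < b) F i.
Proof.
by move=> j_in; rewrite (bigD1_seq j) ?mem_index_iota ?iota_uniq // leq_addr.
Qed.

Lemma ent_period n x i : ent n x (i + n.+1) = ent n x i.
Proof. by rewrite /ent addnAC modnDr. Qed.

Lemma ent1 n x : ent n x 1 = nth 0 x 0.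
Proof. by rewrite /ent add1n modnn. Qed.

Lemma ent_nth n x i : 1 <= i <= n.+1 -> ent n x i = nth 0 x i.-1.
Proof. by case: i => // i /andP[_ lt_i]; rewrite /ent addSn -addnS modnDr modn_small. Qed.

Lemma sum_ent_window n x i : size x = n.+1 ->
  \sum_(1 <= j < n.+2) ent n x (i + j) = sumn x.
Proof.
move=> sz_x; elim: i => [|i IH].
  rewrite big_add1 sumnE [RHS](big_nth 0) sz_x.
  by apply: eq_big_nat => j /andP[_ lt_j]; rewrite add0n ent_nth.
rewrite -IH big_nat_recr //= ent_period [RHS]big_nat_recl // addnC addn1.
by congr (_ + _); apply: eq_bigr => j _; rewrite addSn addnS.
Qed.

Lemma sum_ent n x : size x = n.+1 -> \sum_(1 <= j < n.+2) ent n x j = sumn x.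
Proof.
by move=> sz_x; rewrite -(sum_ent_window 0 sz_x); apply: eq_bigr => j _; rewrite add0n.
Qed.

Lemma Q_le_Qterm n x y i k : 1 <= k <= n.+1 -> Q n x y i <= Qterm n x y i k.
Proof. by move=> k_in; apply: (@ge_bigmin_seq _ nat); rewrite ?mem_index_iota. Qed.

Lemma Q_attained n x y i :
  exists2 k, 1 <= k <= n.+1 & Q n x y i = Qterm n x y i k.
Proof.
rewrite /Q big_seq; elim/big_ind: _ => [|a b [ka ka_in ->] [kb kb_in ->]|k].
- by exists 1.
- by rewrite /minn; case: ltnP => _; [exists ka | exists kb].
- by rewrite mem_index_iota => k_in; exists k.
Qed.

Lemma ent_le_Qterm n x y i j k : 1 <= j < k -> ent n x (i + j) <= Qterm n x y i k.
Proof.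
move=> j_in; apply: leq_trans (leq_addr _ _).
exact: (leq_sum_nat_term (fun j => ent n x (i + j))).
Qed.

Lemma Qterm1_add n x y i : size y = n.+1 -> Qterm n x y i 1 + ent n y i.+1 = sumn y.
Proof.
move=> sz_y; rewrite -(sum_ent_window i sz_y) big_nat_recl // /Qterm big_geq //.
by rewrite add0n big_add1 addn1 addnC.
Qed.

Lemma Q_le_sumn n x y i : size y = n.+1 -> Q n x y i <= sumn y.
Proof.
move=> sz_y; apply: leq_trans (Q_le_Qterm _ _ _ (k := 1) _) _ => //.
by rewrite -(Qterm1_add x i sz_y) leq_addr.
Qed.

Lemma Qterm_shift n x y i k : 1 <= k <= n ->
  Qterm n x y i k.+1 + ent n y i.+1 = ent n x i.+1 + Qterm n x y i.+1 k.
Proof.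
move=> /andP[k_gt0 k_le_n].
have Sx : \sum_(1 <= j < k.+1) ent n x (i + j) =
          ent n x i.+1 + \sum_(1 <= j < k) ent n x (i.+1 + j).
  by rewrite big_nat_recl // addn1; congr (_ + _); apply: eq_bigr => j _; rewrite addSn addnS.
have Sy : \sum_(k.+1 <= j < n.+2) ent n y (i.+1 + j) =
          \sum_(k.+2 <= j < n.+2) ent n y (i + j) + ent n y i.+1.
  rewrite big_nat_recr //= ent_period [in RHS]big_add1; congr (_ + _).
  by apply: eq_bigr => j _; rewrite addSn addnS.
rewrite /Qterm Sx Sy; lia.
Qed.

Lemma Q_period n x y : Q n x y n.+1 = Q n x y 0.
Proof.
have Qterm_period k : Qterm n x y n.+1 k = Qterm n x y 0 k.
  by rewrite /Qterm; congr (_ + _); apply: eq_bigr => j _; rewrite add0n addnC ent_period.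
by rewrite /Q Qterm_period; under eq_bigr do rewrite Qterm_period.
Qed.

Lemma ent_map_iota n (f : nat -> nat) i : 1 <= i <= n.+1 ->
  ent n [seq f j | j <- iota 1 n.+1] i = f i.
Proof.
move=> i_in; rewrite ent_nth // (nth_map 0) ?size_iota ?nth_iota; try lia.
by congr f; lia.
Qed.

Lemma size_Rmap1 n x y : size (Rmap n x y).1 = n.+1.
Proof. by rewrite size_map size_iota. Qed.

Lemma balls_recl n z d : 1 <= d ->
  \sum_(1 <= i < d.+1) ent n z i = ent n z 1 + balls n d z.
Proof. by move=> d_gt0; rewrite big_ltn. Qed.

Lemma balls_recr n z d : 1 <= d -> balls n d.+1 z = balls n d z + ent n z d.+1.
Proof. by move=> d_gt0; rewrite /balls big_nat_recr. Qed.

Lemma sumn_balls n z : size z = n.+1 -> sumn z = ent n z 1 + balls n n.+1 z.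
Proof. by move=> sz_z; rewrite -(sum_ent sz_z) -balls_recl. Qed.

Section Regime.
Variables (n : nat) (x y : elt).
Hypotheses (sz_y : size y = n.+1) (y_le_x1 : sumn y <= nth 0 x 0).

Lemma Q0_add : Q n x y 0 + ent n y 1 = sumn y.
Proof.
have [[|[|k]] // k_in eQ] := Q_attained n x y 0; first by rewrite eQ Qterm1_add.
have := @ent_le_Qterm n x y 0 1 k.+2 erefl; rewrite add0n ent1 -eQ.
have := Qterm1_add x 0 sz_y; have := @Q_le_Qterm n x y 0 1 erefl.
lia.
Qed.

Lemma QS_add i : 1 <= i <= n ->
  Q n x y i + ent n y i.+1 = minn (sumn y) (ent n x i.+1 + Q n x y i.+1).
Proof.
move=> /andP[i_gt0 i_le_n].
have le_sumn : Q n x y i + ent n y i.+1 <= sumn y.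
  by rewrite -(Qterm1_add x i sz_y) leq_add2r Q_le_Qterm.
have upper : Q n x y i + ent n y i.+1 <= ent n x i.+1 + Q n x y i.+1 \/
             sumn y <= ent n x i.+1 + Q n x y i.+1.
  have [k /andP[k_gt0]] := Q_attained n x y i.+1.
  rewrite leq_eqVlt => /orP[/eqP-> eQ | k_le_n eQ]; [right | left].
    have := @ent_le_Qterm n x y i.+1 (n.+1 - i) n.+1.
    have -> : i.+1 + (n.+1 - i) = 1 + n.+1 by lia.
    rewrite -eQ ent_period ent1 => x1_le.
    by apply: leq_trans y_le_x1 (leq_trans (x1_le _) (leq_addl _ _)); lia.
  by rewrite eQ -Qterm_shift ?leq_add2r ?Q_le_Qterm //; lia.
have lower : Q n x y i + ent n y i.+1 = sumn y \/
             ent n x i.+1 + Q n x y i.+1 <= Q n x y i + ent n y i.+1.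
  have [[|[|k]] // k_in eQ] := Q_attained n x y i; first by left; rewrite eQ Qterm1_add.
  by right; rewrite eQ Qterm_shift ?leq_add2l ?Q_le_Qterm //; lia.
lia.
Qed.

Lemma Q_step_bounds i : 1 <= i <= n.+1 ->
  Q n x y i <= ent n y i + Q n x y i.-1 /\ Q n x y i.-1 <= ent n x i + Q n x y i.
Proof.
case: i => [//|[_|i i_in]] /=.
  by have := Q0_add; have := Q_le_sumn x 1 sz_y; rewrite !ent1; lia.
by have := QS_add (i := i.+1); have := Q_le_sumn x i.+2 sz_y; lia.
Qed.

Lemma ent_Rmap1 i : 1 <= i <= n.+1 ->
  ent n (Rmap n x y).1 i + Q n x y i = ent n y i + Q n x y i.-1.
Proof. by move=> i_in; rewrite ent_map_iota //; have := Q_step_bounds i_in; lia. Qed.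

Lemma ent_Rmap2 i : 1 <= i <= n.+1 ->
  ent n (Rmap n x y).2 i + Q n x y i.-1 = ent n x i + Q n x y i.
Proof. by move=> i_in; rewrite ent_map_iota //; have := Q_step_bounds i_in; lia. Qed.

Lemma ent_Rmap_conserved i : 1 <= i <= n.+1 ->
  ent n (Rmap n x y).1 i + ent n (Rmap n x y).2 i = ent n x i + ent n y i.
Proof. by move=> i_in; have := ent_Rmap1 i_in; have := ent_Rmap2 i_in; lia. Qed.

Lemma sum_ent_Rmap1 j : j <= n.+1 ->
  \sum_(1 <= i < j.+1) ent n (Rmap n x y).1 i + Q n x y j =
  \sum_(1 <= i < j.+1) ent n y i + Q n x y 0.
Proof.
elim: j => [|j IH] j_le; first by rewrite !big_geq.
rewrite !(@big_nat_recr _ _ _ j.+1 1) //=.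
by have := @ent_Rmap1 j.+1 j_le; have := IH (ltnW j_le); rewrite /=; lia.
Qed.

Lemma sumn_Rmap1 : sumn (Rmap n x y).1 = sumn y.
Proof.
rewrite -(sum_ent sz_y) -(sum_ent (size_Rmap1 n x y)).
by have := sum_ent_Rmap1 (leqnn n.+1); rewrite Q_period; lia.
Qed.

Lemma head_Rmap2 : nth 0 x 0 <= nth 0 (Rmap n x y).2 0 + sumn y.
Proof.
rewrite -!(@ent1 n); have := @ent_Rmap2 1 erefl; have := Q_le_sumn x 0 sz_y.
by rewrite /=; lia.
Qed.

Lemma Rmap_local d : 2 <= d <= n.+1 ->
  [/\ ent n (Rmap n x y).1 d <= ent n x d,
      balls n d y <= ent n (Rmap n x y).1 1 + balls n d.-1 (Rmap n x y).1 &
      ent n (Rmap n x y).1 d = ent n x d \/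
      balls n d y = ent n (Rmap n x y).1 1 + balls n d.-1 (Rmap n x y).1].
Proof.
case: d => [//|d] d_in; rewrite succnK.
have := @QS_add d (ltac:(lia)).
have := @ent_Rmap1 d.+1 (ltac:(lia)).
have := @sum_ent_Rmap1 d (ltac:(lia)).
have := Q0_add.
have := @balls_recl n (Rmap n x y).1 d (ltac:(lia)).
have Ey := @balls_recl n y d.+1 erefl; rewrite big_nat_recr //= in Ey.
rewrite succnK; split; lia.
Qed.

End Regime.

Lemma ent_behead n (x w : elt) i : behead x = behead w -> 2 <= i <= n.+1 ->
  ent n x i = ent n w i.
Proof.
move=> e i_in; rewrite !ent_nth; try lia.
by case: i i_in => [|[|i]] // _; rewrite /= -!nth_behead e.
Qed.

Section Behead.
Variables (n : nat) (x w y : elt).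
Hypotheses (sz_y : size y = n.+1) (y_le_x1 : sumn y <= nth 0 x 0)
  (y_le_w1 : sumn y <= nth 0 w 0) (e : behead x = behead w).

Lemma Q_behead i : i <= n.+1 -> Q n x y i = Q n w y i.
Proof.
have Q0_eq : Q n x y 0 = Q n w y 0.
  by have := Q0_add sz_y y_le_x1; have := Q0_add sz_y y_le_w1; lia.
case: i => [//|i] i_le.
suff Q_top r : r <= n -> Q n x y (n.+1 - r) = Q n w y (n.+1 - r).
  by have := Q_top (n - i) (leq_subr _ _); rewrite subSn ?subKn //; lia.
elim: r => [|r IH] r_le; first by rewrite subn0 !Q_period.
have Ex := @QS_add n x y sz_y y_le_x1 (n - r) (ltac:(lia)).
have Ew := @QS_add n w y sz_y y_le_w1 (n - r) (ltac:(lia)).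
have -> : n.+1 - r.+1 = n - r by lia.
have nr : (n - r).+1 = n.+1 - r by lia.
rewrite nr -IH ?(ltnW r_le) // -(@ent_behead n x w) // in Ew; last by lia.
by rewrite nr in Ex; lia.
Qed.

Lemma Rmap_behead : (Rmap n x y).1 = (Rmap n w y).1 /\
  behead (Rmap n x y).2 = behead (Rmap n w y).2.
Proof.
split; first by apply/eq_in_map => i; rewrite mem_iota => i_in; rewrite !Q_behead //; lia.
apply/eq_in_map => i; rewrite mem_iota => i_in.
by rewrite !Q_behead ?(@ent_behead n x w) //; lia.
Qed.

End Behead.

Definition total (p : state) : nat := sumn (map sumn p).

Definition sized (n : nat) (p : state) : bool := all (fun x => size x == n.+1) p.

Lemma regime_cons n x y p : size y = n.+1 -> total (y :: p) <= nth 0 x 0 ->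
  sumn y <= nth 0 x 0 /\ total p <= nth 0 (Rmap n x y).2 0.
Proof.
have -> : total (y :: p) = sumn y + total p by [].
move=> sz_y le_x1; have y_le_x1 : sumn y <= nth 0 x 0 by lia.
by have := head_Rmap2 sz_y y_le_x1; lia.
Qed.

Lemma sweep_cons n v y p :
  sweep n v (y :: p) = (Rmap n v y).1 :: sweep n (Rmap n v y).2 p.
Proof. by []. Qed.

Lemma sweep_behead n p : sized n p -> forall x w, behead x = behead w ->
  total p <= nth 0 x 0 -> total p <= nth 0 w 0 -> sweep n x p = sweep n w p.
Proof.
elim: p => [//|y p IH] /andP[/eqP sz_y sz_p] x w e le_x1 le_w1; rewrite !sweep_cons.
have [y_le_x1 le_x1'] := regime_cons sz_y le_x1.
have [y_le_w1 le_w1'] := regime_cons sz_y le_w1.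
have [-> e'] := Rmap_behead sz_y y_le_x1 y_le_w1 e.
by congr (_ :: _); apply: IH.
Qed.

Lemma Tinf_sweep n p : sized n p -> Tinf n p = sweep n (uvac n (total p)) p.
Proof.
move=> sz_p; have Tl_stable l : total p <= l -> Tl n l p = Tl n (total p) p.
  by move=> le_l; apply: sweep_behead.
rewrite /Tinf; set P := fun q => exists N, forall l, N <= l -> Tl n l p = q.
have [N TN] : P (Tl n (total p) p) by exists (total p).
have [N' TN'] := epsilon_spec (inhabits p) P (ex_intro _ _ (ex_intro _ N TN)).
by rewrite -(TN' (maxn N' (total p))) ?leq_maxl // Tl_stable // leq_maxr.
Qed.

(* [carrier n v p j] is the paper's v_j: the carrier after crossing j sites. *)
Fixpoint carrier n (v : elt) (p : state) (j : nat) : elt :=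
  if j is j'.+1 then
    if p is y :: p' then carrier n (Rmap n v y).2 p' j' else v
  else v.

Definition prefix (f : elt -> nat) (q : state) (k : nat) : nat :=
  \sum_(1 <= j < k.+1) f (nth [::] q j.-1).

Lemma prefix0 f q : prefix f q 0 = 0.
Proof. by rewrite /prefix big_geq. Qed.

Lemma prefixS f q k : prefix f q k.+1 = prefix f q k + f (nth [::] q k).
Proof. by rewrite /prefix big_nat_recr. Qed.

Lemma prefix_cons f y q k : prefix f (y :: q) k.+1 = f y + prefix f q k.
Proof.
rewrite /prefix big_nat_recl //; congr (_ + _).
by apply: eq_big_nat => -[].
Qed.

Lemma size_nth_sized n p k : sized n p -> k < size p -> size (nth [::] p k) = n.+1.
Proof. by move=> sz_p k_lt; apply/eqP/(allP sz_p)/mem_nth. Qed.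

Lemma size_sweep n v p : size (sweep n v p) = size p.
Proof. by elim: p v => [//|y p IH] v; rewrite sweep_cons /= IH. Qed.

Lemma sized_sweep n v p : sized n (sweep n v p).
Proof.
elim: p v => [//|y p IH] v; rewrite sweep_cons.
by apply/andP; split; [exact/eqP/size_Rmap1 | exact: IH].
Qed.

Lemma nth_sweep n v p j : j < size p ->
  nth [::] (sweep n v p) j = (Rmap n (carrier n v p j) (nth [::] p j)).1.
Proof. by elim: p v j => [//|y p IH] v [|j] j_lt; rewrite sweep_cons //=; apply: IH. Qed.

Lemma carrier_regime n v p j : sized n p -> total p <= nth 0 v 0 -> j < size p ->
  sumn (nth [::] p j) <= nth 0 (carrier n v p j) 0.
Proof.
elim: p v j => [//|y p IH] v j /andP[/eqP sz_y sz_p] /(regime_cons sz_y)[y_le le_v1].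
by case: j => [//|j] j_lt /=; apply: IH.
Qed.

Lemma prefix_ent_sweep n v p j d : sized n p -> total p <= nth 0 v 0 ->
  j <= size p -> 1 <= d <= n.+1 ->
  ent n (carrier n v p j) d + prefix (fun x => ent n x d) (sweep n v p) j =
  ent n v d + prefix (fun x => ent n x d) p j.
Proof.
elim: p v j => [|y p IH] v [|j] //; rewrite ?prefix0 //.
move=> /andP[/eqP sz_y sz_p] /(regime_cons sz_y)[y_le le_v1] j_le d_in.
rewrite sweep_cons !prefix_cons /=.
have := IH _ j sz_p le_v1 j_le d_in; have := ent_Rmap_conserved sz_y y_le d_in.
lia.
Qed.

Lemma balls_eq0P n x :
  balls n n.+1 x = 0 <-> forall d, 2 <= d <= n.+1 -> ent n x d = 0.
Proof.
split=> [x0 d d_in | ent0]; last first.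
  by rewrite /balls big_nat_cond big1 // => d /andP[d_in _]; apply: ent0.
by apply/eqP; rewrite -leqn0 -x0 (leq_sum_nat_term (ent n x)).
Qed.

Lemma balls_nil n d : balls n d [::] = 0.
Proof. by rewrite /balls big1 // => i _; rewrite /ent nth_nil. Qed.

Lemma balls_uvac n l : balls n n.+1 (uvac n l) = 0.
Proof.
apply/balls_eq0P => -[|[|d]] // d_in.
by rewrite ent_nth //= nth_nseq; case: ifP.
Qed.

(* By conservation an empty carrier stays empty across empty sites, and the
   output at a site never exceeds the carrier. *)
Lemma sweep_vacant n v p r : sized n p -> total p <= nth 0 v 0 ->
  balls n n.+1 v = 0 -> (forall i, i < r -> balls n n.+1 (nth [::] p i) = 0) ->
  forall i, i <= r -> balls n n.+1 (nth [::] (sweep n v p) i) = 0.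
Proof.
move=> sz_p le_v1 /balls_eq0P v0 p0 i i_le.
have [i_lt|i_ge] := ltnP i (size p); last by rewrite nth_default ?size_sweep ?balls_nil.
apply/balls_eq0P => d d_in.
have := prefix_ent_sweep sz_p le_v1 (ltnW i_lt) (ltac:(lia) : 1 <= d <= n.+1).
have -> : prefix (fun x => ent n x d) p i = 0.
  rewrite /prefix big_nat_cond big1 // => j /andP[/andP[j_gt0 j_le] _].
  by apply: (balls_eq0P _ _).1 (p0 j.-1 _) _ d_in; lia.
have [a_le _ _] := Rmap_local (size_nth_sized sz_p i_lt) (carrier_regime sz_p le_v1 i_lt) d_in.
by rewrite nth_sweep // v0 //; lia.
Qed.

Lemma iter_Tinf_vacant n p t j : sized n p -> size p <= t ->
  balls n n.+1 (nth [::] (iter t (Tinf n) p) j) = 0.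
Proof.
move=> sz_p t_ge.
have [sz_t size_t vac_t] : [/\ sized n (iter t (Tinf n) p),
    size (iter t (Tinf n) p) = size p &
    forall i, i < t -> balls n n.+1 (nth [::] (iter t (Tinf n) p) i) = 0].
  elim: t {t_ge} => [|t [sz_t size_t vac_t]] //=; rewrite Tinf_sweep //.
  split=> [||i]; [exact: sized_sweep | by rewrite size_sweep | rewrite ltnS].
  by apply: (sweep_vacant sz_t) => //; apply: balls_uvac.
have [j_lt|j_ge] := ltnP j t; first exact: vac_t.
by rewrite nth_default ?balls_nil // size_t (leq_trans t_ge).
Qed.

Lemma fsum_finite (f : nat -> nat) N : (forall t, N <= t -> f t = 0) ->
  fsum f = \sum_(1 <= t < N.+1) f t.
Proof.
move=> f0.
have partial_sum M : N.+1 <= M -> \sum_(1 <= t < M) f t = \sum_(1 <= t < N.+1) f t.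
  move=> M_ge; rewrite (@big_cat_nat _ _ _ N.+1) //= -[RHS]addn0; congr (_ + _).
  by rewrite big_nat_cond big1 // => t /andP[/andP[/ltnW t_ge _] _]; apply: f0.
set P := fun s => exists N', forall M, N' <= M -> \sum_(1 <= t < M) f t = s.
have [N' sumN'] := epsilon_spec (inhabits 0) P (ex_intro _ _ (ex_intro _ N.+1 partial_sum)).
by rewrite /fsum -/P -(sumN' (maxn N' N.+1)) ?leq_maxl // partial_sum // leq_maxr.
Qed.

Lemma fsum_recl (f g : nat -> nat) N : (forall t, N <= t -> f t = 0) ->
  (forall t, g t = f t.+1) -> fsum f = f 1 + fsum g.
Proof.
move=> f0 gE; rewrite (@fsum_finite f N.+1) => [|t t_ge]; last by apply: f0; lia.
rewrite (@fsum_finite g N) => [|t t_ge]; last by rewrite gE f0 //; lia.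
by rewrite big_ltn // big_add1; congr (_ + _); apply: eq_bigr => t _; rewrite gE.
Qed.

Definition future_balls (n : nat) (q : state) (k : nat) : nat :=
  fsum (fun t => prefix (balls n n.+1) (iter t (Tinf n) q) k).

Lemma future_balls_Tinf n p k : sized n p ->
  future_balls n (Tinf n p) k + prefix (balls n n.+1) (Tinf n p) k = future_balls n p k.
Proof.
move=> sz_p; rewrite /future_balls addnC.
set g := fun t => prefix (balls n n.+1) (iter t (Tinf n) (Tinf n p)) k.
rewrite [RHS](@fsum_recl _ g (size p)) //.
- by move=> t t_ge; rewrite /prefix big1 // => j _; apply: iter_Tinf_vacant.
- by move=> t; rewrite iterSr.
Qed.

Lemma rho_split n q k d : 1 <= d ->
  rho n q k d = Posz (prefix (balls n d) q k + future_balls n q k).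
Proof. by case: d. Qed.

Lemma prefix_balls_recr n q k d : 1 <= d ->
  prefix (balls n d.+1) q k = prefix (balls n d) q k + prefix (fun x => ent n x d.+1) q k.
Proof. by move=> d_gt0; rewrite -big_split; apply: eq_bigr => j _; rewrite balls_recr. Qed.

Lemma nth_Tinf n p k : sized n p -> k < size p ->
  nth [::] (Tinf n p) k = (Rmap n (carrier n (uvac n (total p)) p k) (nth [::] p k)).1.
Proof. by move=> sz_p k_lt; rewrite Tinf_sweep // nth_sweep. Qed.

Lemma prefix_ent_Tinf n p k d : sized n p -> k <= size p -> 2 <= d <= n.+1 ->
  ent n (carrier n (uvac n (total p)) p k) d + prefix (fun x => ent n x d) (Tinf n p) k =
  prefix (fun x => ent n x d) p k.
Proof.
move=> sz_p k_le d_in; rewrite Tinf_sweep //.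
rewrite (prefix_ent_sweep (v := uvac n (total p)) sz_p (leqnn _)) //.
  by rewrite (proj1 (balls_eq0P _ _) (balls_uvac n _)).
by case/andP: d_in => /ltnW ->.
Qed.

Local Open Scope ring_scope.

Theorem proposition4p2 (n : nat) (p : state) :
  (1 <= n)%N -> is_state n p ->
  forall k d : nat, (1 <= k <= size p)%N -> (2 <= d <= n.+1)%N ->
  rho n (Tinf n p) k d.-1 + rho n p k.-1 d =
  Num.max (rho n (Tinf n p) k d + rho n p k.-1 d.-1)
          (rho n (Tinf n p) k.-1 d.-1 + rho n p k d - (lam p k)%:Z).
Proof.
move=> _ st [//|k] d /andP[_ k_lt] d_in.
have sz_p : sized n p by apply/allP => x /(allP st)/andP[].
have sz_y := size_nth_sized sz_p k_lt.
case: d d_in => [//|d] d_in; have d_gt0 : (1 <= d)%N by case/andP: d_in.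
have regime := carrier_regime (v := uvac n (total p)) sz_p (leqnn _) k_lt.
have [a_le balls_le alt] := Rmap_local sz_y regime d_in.
have conserved := prefix_ent_Tinf sz_p (ltnW k_lt) d_in.
have future_k := future_balls_Tinf k sz_p.
have future_k1 := future_balls_Tinf k.+1 sz_p.
have -> : lam p k.+1 = sumn (nth [::] p k) by [].
rewrite -(sumn_Rmap1 sz_y regime) (sumn_balls (size_Rmap1 _ _ _)).
rewrite !prefixS nth_Tinf // in future_k1; rewrite succnK in balls_le alt.
rewrite !succnK !rho_split // !prefixS nth_Tinf //.
rewrite !prefix_balls_recr // (balls_recr _ _ d_gt0).
lia.
Qed.
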